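(* Let $\Gamma$ be a group such that the comparison map $H^2_b(\Gamma,\mathbb R)\to H^2(\Gamma,\mathbb R)$ is not injective. Then $\mathrm{def}^{(1)}(\Gamma)\ge\sqrt3$; in particular $\Gamma$ is not Ulam stable.
   Context: For maps $\mu,\nu:\Gamma\to U(n)$: $\|\mu-\nu\|=\sup_\gamma\|\mu(\gamma)-\nu(\gamma)\|$ (operator norm), $D(\mu)=\inf\{\|\mu-\nu\|:\nu\in\mathrm{Hom}(\Gamma,U(n))\}$, $\mathrm{def}(\mu)=\sup_{x,y}\|\mu(xy)-\mu(x)\mu(y)\|$. $F^{(n)}_\Gamma(\delta)=\sup\{D(\mu):\mathrm{def}(\mu)\le\delta,\mu(e)=\mathrm{Id}\}$ over maps $\mu:\Gamma\to U(n)$; $\mathrm{def}^{(n)}(\Gamma)=\lim_{\delta\to0^+}F^{(n)}_\Gamma(\delta)$. $F^{fd}_\Gamma$ and $\mathrm{def}^{fd}(\Gamma)$ are defined the same way with the supremum over all finite dimensions; $\Gamma$ is Ulam stable if $\mathrm{def}^{fd}(\Gamma)=0$. *)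

From Stdlib Require Import Reals Lra ClassicalEpsilon.
Open Scope R_scope.

Record IsGroup (G : Type) (mul : G -> G -> G) (e : G) (inv : G -> G) : Prop := {
  grp_assoc : forall x y z, mul x (mul y z) = mul (mul x y) z;
  grp_idl : forall x, mul e x = x;
  grp_idr : forall x, mul x e = x;
  grp_invl : forall x, mul (inv x) x = e;
  grp_invr : forall x, mul x (inv x) = e }.

Definition Rsup (E : R -> Prop) : R := epsilon (inhabits 0) (fun l => is_lub E l).
Definition Rinf (E : R -> Prop) : R := - Rsup (fun x => E (- x)).
Definition lim0plus (f : R -> R) : R :=
  epsilon (inhabits 0) (fun L => forall eps, eps > 0 ->
    exists eta, eta > 0 /\ forall d, 0 < d < eta -> Rabs (f d - L) < eps).

Definition C := (R * R)%type.
Definition C0 : C := (0, 0).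
Definition C1 : C := (1, 0).
Definition Cadd (z w : C) : C := (fst z + fst w, snd z + snd w).
Definition Csub (z w : C) : C := (fst z - fst w, snd z - snd w).
Definition Cmul (z w : C) : C :=
  (fst z * fst w - snd z * snd w, fst z * snd w + snd z * fst w).
Definition Cconj (z : C) : C := (fst z, - snd z).
Definition Cnorm2 (z : C) : R := fst z * fst z + snd z * snd z.

Fixpoint Csum (n : nat) (f : nat -> C) : C :=
  match n with O => C0 | S k => Cadd (Csum k f) (f k) end.
Fixpoint Rsum (n : nat) (f : nat -> R) : R :=
  match n with O => 0 | S k => Rsum k f + f k end.

(** * n x n complex matrices (only entries with indices < n are meaningful) *)
Definition Mat := nat -> nat -> C.
Definition Vec := nat -> C.
Definition meq (n : nat) (A B : Mat) : Prop :=
  forall i j, (i < n)%nat -> (j < n)%nat -> A i j = B i j.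
Definition mid : Mat := fun i j => if Nat.eqb i j then C1 else C0.
Definition mmul (n : nat) (A B : Mat) : Mat :=
  fun i j => Csum n (fun k => Cmul (A i k) (B k j)).
Definition madj (A : Mat) : Mat := fun i j => Cconj (A j i).
Definition msub (A B : Mat) : Mat := fun i j => Csub (A i j) (B i j).
Definition unitary (n : nat) (A : Mat) : Prop := meq n (mmul n (madj A) A) mid.
Definition mapply (n : nat) (A : Mat) (v : Vec) : Vec :=
  fun i => Csum n (fun k => Cmul (A i k) (v k)).
Definition vnorm (n : nat) (v : Vec) : R := sqrt (Rsum n (fun i => Cnorm2 (v i))).
Definition opnorm (n : nat) (A : Mat) : R :=
  Rsup (fun r => exists v, vnorm n v = 1 /\ r = vnorm n (mapply n A v)).

Section Ulam.
Variables (G : Type) (mul : G -> G -> G) (e : G).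

Definition Umap (n : nat) (mu : G -> Mat) : Prop := forall g, unitary n (mu g).
Definition IsHom (n : nat) (nu : G -> Mat) : Prop :=
  Umap n nu /\ forall x y, meq n (nu (mul x y)) (mmul n (nu x) (nu y)).
Definition mapdist (n : nat) (mu nu : G -> Mat) : R :=
  Rsup (fun r => exists g, r = opnorm n (msub (mu g) (nu g))).
Definition Dist (n : nat) (mu : G -> Mat) : R :=
  Rinf (fun r => exists nu, IsHom n nu /\ r = mapdist n mu nu).
Definition defect (n : nat) (mu : G -> Mat) : R :=
  Rsup (fun r => exists x y, r = opnorm n (msub (mu (mul x y)) (mmul n (mu x) (mu y)))).
Definition Fn (n : nat) (delta : R) : R :=
  Rsup (fun r => exists mu, Umap n mu /\ defect n mu <= delta /\
                   meq n (mu e) mid /\ r = Dist n mu).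
Definition def_n (n : nat) : R := lim0plus (Fn n).
Definition Ffd (delta : R) : R :=
  Rsup (fun r => exists n mu, (1 <= n)%nat /\ Umap n mu /\ defect n mu <= delta /\
                   meq n (mu e) mid /\ r = Dist n mu).
Definition def_fd : R := lim0plus Ffd.
Definition UlamStable : Prop := def_fd = 0.

(** * Second (bounded) cohomology with trivial real coefficients,
    inhomogeneous (bar) cochains *)
Definition cobound1 (f : G -> R) : G -> G -> R :=
  fun g h => f h - f (mul g h) + f g.
Definition cobound2 (w : G -> G -> R) : G -> G -> G -> R :=
  fun g h k => w h k - w (mul g h) k + w g (mul h k) - w g h.
Definition cocycle2 (w : G -> G -> R) : Prop := forall g h k, cobound2 w g h k = 0.
Definition bounded1 (f : G -> R) : Prop := exists M, forall g, Rabs (f g) <= M.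
Definition bounded2 (w : G -> G -> R) : Prop := exists M, forall g h, Rabs (w g h) <= M.
Definition cohom_eq (w w' : G -> G -> R) : Prop :=
  exists f, forall g h, w g h - w' g h = cobound1 f g h.
Definition bcohom_eq (w w' : G -> G -> R) : Prop :=
  exists f, bounded1 f /\ forall g h, w g h - w' g h = cobound1 f g h.
Definition comparison_injective : Prop :=
  forall w w', cocycle2 w -> bounded2 w -> cocycle2 w' -> bounded2 w' ->
    cohom_eq w w' -> bcohom_eq w w'.
End Ulam.

(* If the comparison map is not injective, some f : Γ → ℝ has bounded coboundary but is not
   at bounded distance from a homomorphism.  For small t > 0, g ↦ exp(i t f(g)) is a map to
   U(1) of defect O(t).  If a character χ were within s < √3 of it, then, as |exp(iθ) - 1| < s
   forces |θ| < 2π/3, χ would lift to a real ψ with |t f - ψ| < 2π/3; the additivity defect of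
   ψ is then a multiple of 2π of absolute value below 2π, so ψ is additive and f - ψ/t is
   bounded.  Hence D(exp(i t f)) ≥ s for every s < √3. *)
From Stdlib Require Import Reals Lra Lia ClassicalEpsilon Classical.
Open Scope R_scope.

Lemma Rsup_spec (E : R -> Prop) :
  (exists x, E x) -> (exists M, forall x, E x -> x <= M) -> is_lub E (Rsup E).
Proof.
  intros Hne [M HM]. unfold Rsup. apply epsilon_spec.
  destruct (completeness E) as [m Hm]; [exists M; exact HM | exact Hne | ].
  exists m; exact Hm.
Qed.

Lemma Rsup_ub (E : R -> Prop) x M : E x -> (forall y, E y -> y <= M) -> x <= Rsup E.
Proof. intros Hx HM. destruct (Rsup_spec E) as [Hub _]; eauto. Qed.

Lemma Rsup_le (E : R -> Prop) M :
  (exists x, E x) -> (forall y, E y -> y <= M) -> Rsup E <= M.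
Proof. intros Hne HM. destruct (Rsup_spec E) as [_ Hleast]; eauto. Qed.

Lemma Rsup_eq (E : R -> Prop) a : E a -> (forall y, E y -> y = a) -> Rsup E = a.
Proof.
  intros Ha Hall. apply Rle_antisym.
  - apply Rsup_le; eauto. intros y Hy; rewrite (Hall y Hy); lra.
  - apply (Rsup_ub E a a); auto. intros y Hy; rewrite (Hall y Hy); lra.
Qed.

Lemma Rsup_ge_approx (E : R -> Prop) a b :
  (forall s, s < a -> exists x, E x /\ s <= x) -> (forall x, E x -> x <= b) -> a <= Rsup E.
Proof.
  intros Happrox Hb. apply Rnot_lt_le. intro Hlt.
  destruct (Happrox ((Rsup E + a) / 2)) as [x [Hx Hsx]]; [lra|].
  assert (x <= Rsup E) by (apply (Rsup_ub _ _ b); auto). lra.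
Qed.

Lemma Rsup_le_Rsup (E1 E2 : R -> Prop) b :
  (forall x, E1 x -> E2 x) -> (exists x, E1 x) -> (forall x, E2 x -> x <= b) ->
  Rsup E1 <= Rsup E2.
Proof. intros Hsub Hne Hb. apply Rsup_le; auto. intros y Hy. apply (Rsup_ub _ _ b); auto. Qed.

Lemma Rinf_ge (E : R -> Prop) m :
  (exists x, E x) -> (forall y, E y -> m <= y) -> m <= Rinf E.
Proof.
  intros [x Hx] Hlb. unfold Rinf.
  assert (Rsup (fun x => E (- x)) <= - m); [|lra].
  apply Rsup_le.
  - exists (- x). rewrite Ropp_involutive; auto.
  - intros y Hy. specialize (Hlb _ Hy). lra.
Qed.

Lemma Rinf_le (E : R -> Prop) x m : E x -> (forall y, E y -> m <= y) -> Rinf E <= x.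
Proof.
  intros Hx Hlb. unfold Rinf.
  assert (- x <= Rsup (fun x => E (- x))); [|lra].
  apply (Rsup_ub _ (- x) (- m)).
  - rewrite Ropp_involutive; auto.
  - intros y Hy. specialize (Hlb _ Hy). lra.
Qed.

Definition has_lim0plus (F : R -> R) (L : R) : Prop :=
  forall eps, eps > 0 -> exists eta, eta > 0 /\ forall d, 0 < d < eta -> Rabs (F d - L) < eps.

Lemma lim0plus_spec F L : has_lim0plus F L -> has_lim0plus F (lim0plus F).
Proof. intros HL. unfold lim0plus. apply epsilon_spec. exists L; exact HL. Qed.

Lemma has_lim0plus_nondecreasing F a :
  (forall d, d > 0 -> a <= F d) -> (forall d1 d2, 0 < d1 -> d1 <= d2 -> F d1 <= F d2) ->
  has_lim0plus F (Rinf (fun x => exists d, d > 0 /\ x = F d)).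
Proof.
  intros Hlb Hmono eps Heps.
  set (L := Rinf _).
  assert (HL : forall d, d > 0 -> L <= F d).
  { intros d Hd. apply (Rinf_le _ _ a); eauto. intros y [d' [Hd' ->]]; auto. }
  destruct (classic (exists d, d > 0 /\ F d < L + eps)) as [[d0 [Hd0 Hclose]]|Hfar].
  - exists d0; split; auto. intros d [Hd Hdd].
    assert (F d <= F d0) by (apply Hmono; lra).
    specialize (HL d Hd). apply Rabs_def1; lra.
  - exfalso.
    assert (L + eps <= L); [|lra].
    apply Rinf_ge; [exists (F 1), 1; split; [lra|auto]|].
    intros y [d [Hd ->]]. apply Rnot_lt_le. intro. apply Hfar; eauto.
Qed.

Lemma lim0plus_ge F a :
  (forall d, d > 0 -> a <= F d) -> (forall d1 d2, 0 < d1 -> d1 <= d2 -> F d1 <= F d2) ->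
  lim0plus F >= a.
Proof.
  intros Hlb Hmono.
  pose proof (lim0plus_spec _ _ (has_lim0plus_nondecreasing F a Hlb Hmono)) as Hlim.
  apply Rnot_lt_ge. intro Hlt.
  destruct (Hlim (a - lim0plus F)) as [eta [Heta Hclose]]; [lra|].
  specialize (Hclose (eta / 2) ltac:(lra)). specialize (Hlb (eta / 2) ltac:(lra)).
  apply Rabs_def2 in Hclose. lra.
Qed.

Lemma lim0plus_Rsup_ge (E : R -> R -> Prop) a b :
  (forall d, d > 0 -> forall s, s < a -> exists x, E d x /\ s <= x) ->
  (forall d x, E d x -> x <= b) ->
  (forall d1 d2 x, d1 <= d2 -> E d1 x -> E d2 x) ->
  lim0plus (fun d => Rsup (E d)) >= a.
Proof.
  intros Happrox Hb Hmono. apply lim0plus_ge.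
  - intros d Hd. apply (Rsup_ge_approx _ _ b (Happrox d Hd) (Hb d)).
  - intros d1 d2 Hd1 Hd12. apply (Rsup_le_Rsup _ _ b); [eauto| |exact (Hb d2)].
    destruct (Happrox d1 Hd1 (a - 1) ltac:(lra)) as [x [Hx _]]; eauto.
Qed.

Ltac C_ring := intros; repeat match goal with z : C |- _ => destruct z end;
  unfold Cmul, Cadd, Csub, Cconj, C0, C1, Cnorm2; simpl; f_equal; ring.

Lemma Csum_ext_lt n f g : (forall k, (k < n)%nat -> f k = g k) -> Csum n f = Csum n g.
Proof.
  induction n; intros H; simpl; auto.
  rewrite IHn by (intros; apply H; lia). rewrite H by lia. auto.
Qed.

Lemma Csum_add n f g : Csum n (fun k => Cadd (f k) (g k)) = Cadd (Csum n f) (Csum n g).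
Proof. induction n; simpl; [C_ring|]. rewrite IHn. C_ring. Qed.

Lemma Csum_sub n f g : Csum n (fun k => Csub (f k) (g k)) = Csub (Csum n f) (Csum n g).
Proof. induction n; simpl; [C_ring|]. rewrite IHn. C_ring. Qed.

Lemma Cmul_Csum_l n c f : Cmul c (Csum n f) = Csum n (fun k => Cmul c (f k)).
Proof. induction n; simpl; [C_ring|]. rewrite <- IHn. C_ring. Qed.

Lemma Cmul_Csum_r n c f : Cmul (Csum n f) c = Csum n (fun k => Cmul (f k) c).
Proof. induction n; simpl; [C_ring|]. rewrite <- IHn. C_ring. Qed.

Lemma Cconj_Csum n f : Cconj (Csum n f) = Csum n (fun k => Cconj (f k)).
Proof. induction n; simpl; [C_ring|]. rewrite <- IHn. C_ring. Qed.

Lemma Csum_zero n f : (forall k, (k < n)%nat -> f k = C0) -> Csum n f = C0.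
Proof.
  induction n; intros H; simpl; auto.
  rewrite IHn by (intros; apply H; lia). rewrite H by lia. C_ring.
Qed.

Lemma Csum_swap n m (f : nat -> nat -> C) :
  Csum n (fun i => Csum m (fun j => f i j)) = Csum m (fun j => Csum n (fun i => f i j)).
Proof.
  induction n; simpl.
  - symmetry; apply Csum_zero; auto.
  - rewrite IHn, <- Csum_add. auto.
Qed.

Lemma mid_sym i j : mid i j = mid j i.
Proof. unfold mid. rewrite Nat.eqb_sym. auto. Qed.

Lemma Csum_mid_r n k (f : nat -> C) : (k < n)%nat -> Csum n (fun l => Cmul (f l) (mid k l)) = f k.
Proof.
  induction n; intros Hk; [lia|]. simpl.
  destruct (Nat.eq_dec k n) as [->|Hne].
  - rewrite Csum_zero.
    + unfold mid. rewrite Nat.eqb_refl. destruct (f n). C_ring.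
    + intros l Hl. unfold mid. replace (Nat.eqb n l) with false by (symmetry; apply Nat.eqb_neq; lia).
      C_ring.
  - rewrite IHn by lia. unfold mid.
    replace (Nat.eqb k n) with false by (symmetry; apply Nat.eqb_neq; auto).
    destruct (f k). C_ring.
Qed.

Lemma Rsum_ext_lt n f g : (forall k, (k < n)%nat -> f k = g k) -> Rsum n f = Rsum n g.
Proof.
  induction n; intros H; simpl; auto.
  rewrite IHn by (intros; apply H; lia). rewrite H by lia. auto.
Qed.

Lemma Rsum_fst n f : Rsum n (fun i => fst (f i)) = fst (Csum n f).
Proof. induction n; simpl; auto. rewrite IHn. auto. Qed.

Lemma Rsum_le n f g : (forall k, (k < n)%nat -> f k <= g k) -> Rsum n f <= Rsum n g.
Proof.
  induction n; intros H; simpl; [lra|].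
  assert (f n <= g n) by (apply H; lia).
  assert (Rsum n f <= Rsum n g) by (apply IHn; intros; apply H; lia). lra.
Qed.

Lemma Rsum_lin n a b f g : Rsum n (fun i => a * f i + b * g i) = a * Rsum n f + b * Rsum n g.
Proof. induction n; simpl; [ring|]. rewrite IHn. ring. Qed.

Lemma Rsum_nonneg n f : (forall k, 0 <= f k) -> 0 <= Rsum n f.
Proof. induction n; intros H; simpl; [lra|]. pose proof (H n). specialize (IHn H). lra. Qed.

Lemma Cnorm2_nonneg z : 0 <= Cnorm2 z.
Proof. unfold Cnorm2. nra. Qed.

Lemma Cnorm2_fst z : Cnorm2 z = fst (Cmul (Cconj z) z).
Proof. destruct z; unfold Cnorm2, Cmul, Cconj; simpl; ring. Qed.

Lemma unitary_norm n U v : unitary n U ->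
  Rsum n (fun i => Cnorm2 (mapply n U v i)) = Rsum n (fun i => Cnorm2 (v i)).
Proof.
  intros HU.
  rewrite (Rsum_ext_lt n _ (fun i => fst (Cmul (Cconj (mapply n U v i)) (mapply n U v i))))
    by (intros; apply Cnorm2_fst).
  rewrite (Rsum_ext_lt n (fun i => Cnorm2 (v i)) (fun i => fst (Cmul (Cconj (v i)) (v i))))
    by (intros; apply Cnorm2_fst).
  rewrite !Rsum_fst. f_equal.
  transitivity (Csum n (fun i => Csum n (fun k => Csum n (fun l =>
     Cmul (Cmul (Cconj (v k)) (v l)) (Cmul (madj U k i) (U i l)))))).
  { apply Csum_ext_lt. intros i Hi. unfold mapply.
    rewrite Cconj_Csum, Cmul_Csum_r. apply Csum_ext_lt. intros k Hk.
    rewrite Cmul_Csum_l. apply Csum_ext_lt. intros l Hl. unfold madj. C_ring. }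
  rewrite Csum_swap.
  transitivity (Csum n (fun k => Csum n (fun l => Cmul (Cmul (Cconj (v k)) (v l)) (mid k l)))).
  { apply Csum_ext_lt. intros k Hk. rewrite Csum_swap. apply Csum_ext_lt. intros l Hl.
    rewrite <- Cmul_Csum_l. f_equal. apply HU; auto. }
  apply Csum_ext_lt. intros k Hk.
  apply (Csum_mid_r n k (fun l => Cmul (Cconj (v k)) (v l))); auto.
Qed.

Lemma mapply_msub n A B v i :
  mapply n (msub A B) v i = Csub (mapply n A v i) (mapply n B v i).
Proof. unfold mapply. rewrite <- Csum_sub. apply Csum_ext_lt. intros. unfold msub. C_ring. Qed.

Lemma sqrt_eq_1 x : 0 <= x -> sqrt x = 1 -> x = 1.
Proof. intros H H1. rewrite <- (sqrt_sqrt x H), H1. ring. Qed.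

Definition e0 : Vec := fun i => if Nat.eqb i 0 then C1 else C0.

Lemma vnorm_e0 n : (1 <= n)%nat -> vnorm n e0 = 1.
Proof.
  intros Hn. unfold vnorm.
  assert (H : forall m, Rsum m (fun i => Cnorm2 (e0 i)) = if Nat.eqb m 0 then 0 else 1).
  { induction m; simpl; auto. rewrite IHm.
    destruct m; simpl; unfold e0, Cnorm2, C1, C0; simpl; ring. }
  rewrite H. destruct n; [lia|]. apply sqrt_1.
Qed.

Lemma opnorm_sub_unitary_bound n A B : (1 <= n)%nat -> unitary n A -> unitary n B ->
  0 <= opnorm n (msub A B) <= 2.
Proof.
  intros Hn HA HB. unfold opnorm.
  assert (Hub : forall r, (exists v, vnorm n v = 1 /\ r = vnorm n (mapply n (msub A B) v)) ->
                          r <= 2).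
  { intros r [v [Hv ->]]. unfold vnorm in *.
    apply sqrt_eq_1 in Hv; [|apply Rsum_nonneg; intros; apply Cnorm2_nonneg].
    replace 2 with (sqrt (2 * 2)) by (apply sqrt_square; lra).
    apply sqrt_le_1_alt.
    apply Rle_trans with
      (Rsum n (fun i => 2 * Cnorm2 (mapply n A v i) + 2 * Cnorm2 (mapply n B v i))).
    - apply Rsum_le. intros k Hk. rewrite mapply_msub.
      destruct (mapply n A v k) as [a b], (mapply n B v k) as [c d].
      unfold Cnorm2, Csub; simpl. pose proof (Rle_0_sqr (a + c)); pose proof (Rle_0_sqr (b + d)).
      unfold Rsqr in *. nra.
    - rewrite Rsum_lin, !unitary_norm by auto. lra. }
  assert (He0 : exists v, vnorm n v = 1 /\
            vnorm n (mapply n (msub A B) e0) = vnorm n (mapply n (msub A B) v)).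
  { exists e0; split; auto. apply vnorm_e0; auto. }
  split.
  - apply Rle_trans with (vnorm n (mapply n (msub A B) e0)); [apply sqrt_pos|].
    apply (Rsup_ub _ _ 2); auto.
  - apply Rsup_le; eauto.
Qed.

Lemma mid_unitary n : unitary n mid.
Proof.
  intros i j Hi Hj. unfold mmul, madj.
  rewrite (Csum_ext_lt n _ (fun k => Cmul (Cconj (mid k i)) (mid j k)))
    by (intros; rewrite (mid_sym k j); auto).
  rewrite (Csum_mid_r n j (fun k => Cconj (mid k i))) by auto.
  rewrite mid_sym. unfold mid. destruct (Nat.eqb i j); C_ring.
Qed.

Lemma opnorm1 A : opnorm 1 A = sqrt (Cnorm2 (A 0%nat 0%nat)).
Proof.
  unfold opnorm. apply Rsup_eq.
  - exists e0. split; [apply vnorm_e0; auto|].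
    unfold vnorm, mapply, e0; simpl. f_equal.
    destruct (A 0%nat 0%nat); unfold Cnorm2, Cadd, Cmul, C0, C1; simpl; ring.
  - intros y [v [Hv ->]]. unfold vnorm in *. simpl in *.
    apply sqrt_eq_1 in Hv; [|pose proof (Cnorm2_nonneg (v 0%nat)); lra].
    unfold mapply; simpl. f_equal.
    destruct (A 0%nat 0%nat) as [a b], (v 0%nat) as [x y].
    unfold Cnorm2, Cadd, Cmul, C0 in *; simpl in *. nra.
Qed.

Lemma unitary1 A : unitary 1 A <-> Cnorm2 (A 0%nat 0%nat) = 1.
Proof.
  split.
  - intros H. specialize (H 0%nat 0%nat ltac:(lia) ltac:(lia)).
    unfold mmul, madj, mid in H; simpl in H. apply (f_equal fst) in H.
    destruct (A 0%nat 0%nat) as [a b].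
    unfold Cnorm2, Cadd, Cmul, Cconj, C0, C1 in *; simpl in *. lra.
  - intros H i j Hi Hj. replace i with 0%nat by lia. replace j with 0%nat by lia.
    unfold mmul, madj, mid; simpl. destruct (A 0%nat 0%nat) as [a b].
    unfold Cnorm2, Cadd, Cmul, Cconj, C0, C1 in *; simpl in *. f_equal; lra.
Qed.

Lemma mmul1 A B : mmul 1 A B 0%nat 0%nat = Cmul (A 0%nat 0%nat) (B 0%nat 0%nat).
Proof. unfold mmul; simpl. C_ring. Qed.

Definition cis (a : R) : C := (cos a, sin a).

Lemma cis_0 : cis 0 = C1.
Proof. unfold cis, C1. rewrite cos_0, sin_0. auto. Qed.

Lemma Cnorm2_cis a : Cnorm2 (cis a) = 1.
Proof. unfold Cnorm2, cis; simpl. pose proof (sin2_cos2 a). unfold Rsqr in *. lra. Qed.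

Lemma Cmul_cis a b : Cmul (cis a) (cis b) = cis (a + b).
Proof. unfold Cmul, cis; simpl. rewrite cos_plus, sin_plus. f_equal; ring. Qed.

Lemma Cnorm2_sub_cis a b : Cnorm2 (Csub (cis a) (cis b)) = 2 - 2 * cos (a - b).
Proof.
  rewrite cos_minus. pose proof (sin2_cos2 a). pose proof (sin2_cos2 b).
  unfold Rsqr in *. unfold Cnorm2, Csub, cis; simpl. nra.
Qed.

Lemma sin_sqr_le y : sin y * sin y <= y * y.
Proof.
  assert (Hpos : forall y, 0 < y -> sin y * sin y <= y * y).
  { intros x Hx. pose proof (sin_lt_x x Hx). pose proof (SIN_bound x).
    destruct (Rle_lt_dec 1 x); [nra|].
    assert (0 < sin x) by (apply sin_gt_0; pose proof PI2_1; pose proof PI_RGT_0; lra). nra. }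
  destruct (Rtotal_order y 0) as [Hy|[->|Hy]].
  - pose proof (Hpos (- y) ltac:(lra)). rewrite sin_neg in *. nra.
  - rewrite sin_0. lra.
  - auto.
Qed.

Lemma dist_cis_le a b : sqrt (Cnorm2 (Csub (cis a) (cis b))) <= Rabs (a - b).
Proof.
  rewrite Cnorm2_sub_cis, <- sqrt_Rsqr_abs. apply sqrt_le_1_alt. unfold Rsqr.
  replace (cos (a - b)) with (cos (2 * ((a - b) / 2))) by (f_equal; field).
  rewrite cos_2a_sin. pose proof (sin_sqr_le ((a - b) / 2)). nra.
Qed.

Lemma cos_eq_1_small z : cos z = 1 -> Rabs z < 2 * PI -> z = 0.
Proof.
  intros Hc Hz.
  replace z with (2 * (z / 2)) in Hc by field. rewrite cos_2a_sin in Hc.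
  assert (Hs : sin (z / 2) = 0) by nra.
  apply Rabs_def2 in Hz.
  destruct (Rtotal_order z 0) as [H|[H|H]]; auto.
  - pose proof (sin_gt_0 (- (z / 2))). rewrite sin_neg in *. lra.
  - pose proof (sin_gt_0 (z / 2)). lra.
Qed.

Lemma cis_inj_small u v : cis u = cis v -> Rabs (u - v) < 2 * PI -> u = v.
Proof.
  intros Heq Hsmall.
  assert (Hcos : cos (u - v) = 1).
  { pose proof (Cnorm2_sub_cis u v) as H. rewrite Heq in H.
    unfold Cnorm2, Csub in H; simpl in H. lra. }
  pose proof (cos_eq_1_small _ Hcos Hsmall). lra.
Qed.

Lemma arg_exists z : Cnorm2 z = 1 -> exists th, cis th = z /\ -PI <= th <= PI.
Proof.
  destruct z as [x y]. unfold Cnorm2, cis; simpl. intros H.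
  assert (Hx : -1 <= x <= 1) by nra.
  pose proof (acos_bound x).
  assert (Hs : sin (acos x) = Rabs y).
  { rewrite sin_acos by auto. rewrite <- sqrt_Rsqr_abs. f_equal. unfold Rsqr. lra. }
  destruct (Rle_lt_dec 0 y).
  - exists (acos x). rewrite cos_acos, Hs, Rabs_right by lra. split; [auto|lra].
  - exists (- acos x). rewrite cos_neg, sin_neg, cos_acos, Hs, Rabs_left by lra.
    split; [f_equal; ring|lra].
Qed.

Lemma Rabs_lt_acos c th : -1 <= c <= 1 -> c < cos th -> -PI <= th <= PI -> Rabs th < acos c.
Proof.
  intros Hc Hth Hb. pose proof (acos_bound c).
  apply (cos_decreasing_0 (acos c) (Rabs th)); try lra.
  - apply Rabs_pos.
  - apply Rabs_le; lra.
  - rewrite cos_acos by lra. unfold Rabs; destruct (Rcase_abs th); rewrite ?cos_neg; lra.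
Qed.

Lemma acos_lt_2PI3 c : -1/2 < c <= 1 -> acos c < 2 * (PI / 3).
Proof.
  intros Hc. pose proof PI_RGT_0. pose proof (acos_bound c).
  apply (cos_decreasing_0 (2 * (PI / 3)) (acos c)); try lra.
  rewrite cos_acos, cos_2a_cos, cos_PI3 by lra. lra.
Qed.

(* [1 - s^2/2] is the cosine of the angle at which two unit complex numbers are [s] apart. *)
Lemma cis_lift a z s : Cnorm2 z = 1 -> 0 <= s <= 2 -> sqrt (Cnorm2 (Csub (cis a) z)) < s ->
  exists th, Rabs th < acos (1 - s * s / 2) /\ cis (a - th) = z.
Proof.
  intros Hz Hs Hnear.
  destruct (arg_exists (Cmul (cis a) (Cconj z))) as [th [Hth Hb]].
  { pose proof (Cnorm2_cis a). destruct z as [p q]. unfold cis in *.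
    unfold Cnorm2, Cmul, Cconj in *; simpl in *. nra. }
  exists th. split.
  - apply Rabs_lt_acos; [nra| |auto].
    assert (Hsq : Cnorm2 (Csub (cis a) z) < s * s).
    { pose proof (sqrt_pos (Cnorm2 (Csub (cis a) z))).
      rewrite <- (sqrt_sqrt _ (Cnorm2_nonneg (Csub (cis a) z))). nra. }
    apply (f_equal fst) in Hth. pose proof (Cnorm2_cis a).
    destruct z as [p q]. unfold cis in *. unfold Cnorm2, Csub, Cmul, Cconj in *; simpl in *. nra.
  - replace (cis (a - th)) with (Cmul (cis a) (Cconj (cis th))).
    2:{ unfold Cmul, Cconj, cis; simpl. rewrite cos_minus, sin_minus. f_equal; ring. }
    rewrite Hth. pose proof (Cnorm2_cis a) as Ha. destruct z as [p q]. unfold cis in *.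
    unfold Cnorm2, Cmul, Cconj in *; simpl in *.
    f_equal; [transitivity ((cos a * cos a + sin a * sin a) * p)
             |transitivity ((cos a * cos a + sin a * sin a) * q)]; try ring; rewrite Ha; ring.
Qed.

Section Ulam.
Variables (G : Type) (mul : G -> G -> G) (e : G).

Lemma const_id_hom n : IsHom G mul n (fun _ => mid).
Proof.
  split; [intros g; apply mid_unitary|].
  intros x y i j Hi Hj. unfold mmul.
  rewrite (Csum_ext_lt n _ (fun k => Cmul (mid i k) (mid j k)))
    by (intros; rewrite (mid_sym k j); auto).
  rewrite (Csum_mid_r n j (fun k => mid i k)) by auto. auto.
Qed.

Lemma mapdist_bound n mu nu : (1 <= n)%nat -> Umap G n mu -> Umap G n nu ->
  0 <= mapdist G n mu nu <= 2.
Proof.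
  intros Hn Hmu Hnu. unfold mapdist.
  assert (Hb : forall y, (exists g, y = opnorm n (msub (mu g) (nu g))) -> y <= 2).
  { intros y [g ->]. apply opnorm_sub_unitary_bound; auto. }
  split.
  - apply Rle_trans with (opnorm n (msub (mu e) (nu e))).
    + apply opnorm_sub_unitary_bound; auto.
    + apply (Rsup_ub _ _ 2); [exists e|]; auto.
  - apply Rsup_le; [eexists; exists e|]; eauto.
Qed.

Lemma Dist_bound n mu : (1 <= n)%nat -> Umap G n mu -> 0 <= Dist G mul n mu <= 2.
Proof.
  intros Hn Hmu. unfold Dist.
  assert (Htriv : exists r, (exists nu, IsHom G mul n nu /\ r = mapdist G n mu nu)).
  { exists (mapdist G n mu (fun _ => mid)), (fun _ => mid). split; auto. apply const_id_hom. }
  split.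
  - apply Rinf_ge; auto. intros y [nu [[Hnu _] ->]]. apply mapdist_bound; auto.
  - apply Rle_trans with (mapdist G n mu (fun _ => mid)).
    + apply (Rinf_le _ _ 0).
      * exists (fun _ => mid); split; auto. apply const_id_hom.
      * intros y [nu [[Hnu _] ->]]. apply mapdist_bound; auto.
    + apply mapdist_bound; auto. intros g; apply mid_unitary.
Qed.

Lemma Dist_ge n mu s : (1 <= n)%nat -> Umap G n mu ->
  (forall nu, IsHom G mul n nu -> exists g, s <= opnorm n (msub (mu g) (nu g))) ->
  s <= Dist G mul n mu.
Proof.
  intros Hn Hmu Hfar. apply Rinf_ge.
  - exists (mapdist G n mu (fun _ => mid)), (fun _ => mid). split; auto. apply const_id_hom.
  - intros y [nu [Hnu ->]]. destruct (Hfar nu Hnu) as [g Hg].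
    apply Rle_trans with (opnorm n (msub (mu g) (nu g))); auto.
    apply (Rsup_ub _ _ 2); eauto.
    intros z [g' ->]. apply opnorm_sub_unitary_bound; auto. apply Hnu.
Qed.

Lemma def_ge_of_far_maps a :
  (forall d, d > 0 -> forall s, s < a -> exists mu, Umap G 1 mu /\
     defect G mul 1 mu <= d /\ meq 1 (mu e) mid /\ s <= Dist G mul 1 mu) ->
  def_n G mul e 1 >= a /\ def_fd G mul e >= a.
Proof.
  intros Hfar. split.
  - apply (lim0plus_Rsup_ge _ a 2).
    + intros d Hd s Hs. destruct (Hfar d Hd s Hs) as [mu Hmu].
      exists (Dist G mul 1 mu). split; [exists mu|]; tauto.
    + intros d y [mu [Hmu [_ [_ ->]]]]. apply Dist_bound; auto.
    + intros d1 d2 y Hd [mu [Hmu [Hdef [He ->]]]]. exists mu. repeat split; auto. lra.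
  - apply (lim0plus_Rsup_ge _ a 2).
    + intros d Hd s Hs. destruct (Hfar d Hd s Hs) as [mu Hmu].
      exists (Dist G mul 1 mu). split; [exists 1%nat, mu|]; intuition.
    + intros d y [n [mu [Hn [Hmu [_ [_ ->]]]]]]. apply Dist_bound; auto.
    + intros d1 d2 y Hd [n [mu [Hn [Hmu [Hdef [He ->]]]]]]. exists n, mu. repeat split; auto. lra.
Qed.

Definition additive (phi : G -> R) : Prop := forall x y, phi (mul x y) = phi x + phi y.

(* Only the boundedness of the two cocycles matters, not the cocycle identity. *)
Lemma quasimorphism_of_not_comparison_injective : ~ comparison_injective G mul ->
  exists f M, (forall g h, Rabs (cobound1 G mul f g h) <= M) /\
    ~ exists f', bounded1 G f' /\ forall g h, cobound1 G mul f g h = cobound1 G mul f' g h.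
Proof.
  intros Hnot. apply NNPP. intro Hno. apply Hnot.
  intros w w' _ [Mw Hw] _ [Mw' Hw'] [f Hf]. apply NNPP. intro Hnb.
  apply Hno. exists f, (Mw + Mw'). split.
  - intros g h. rewrite <- Hf.
    eapply Rle_trans; [apply Rabs_triang|]. rewrite Rabs_Ropp.
    pose proof (Hw g h). pose proof (Hw' g h). lra.
  - intros [f' [Hb Heq]]. apply Hnb. exists f'. split; auto. intros g h. rewrite Hf. auto.
Qed.

Lemma quasimorphism_normalize f M : mul e e = e ->
  (forall g h, Rabs (cobound1 G mul f g h) <= M) ->
  forall g h, Rabs ((f (mul g h) - f e) - (f g - f e) - (f h - f e)) <= 2 * M.
Proof.
  intros Hee HM g h. pose proof (HM g h). pose proof (HM e e). unfold cobound1 in *.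
  rewrite Hee in *.
  replace (f (mul g h) - f e - (f g - f e) - (f h - f e))
    with (- (f h - f (mul g h) + f g) + (f e - f e + f e)) by ring.
  eapply Rle_trans; [apply Rabs_triang|]. rewrite Rabs_Ropp. lra.
Qed.

Lemma not_near_additive f c :
  ~ (exists f', bounded1 G f' /\ forall g h, cobound1 G mul f g h = cobound1 G mul f' g h) ->
  ~ exists phi, additive phi /\ bounded1 G (fun g => f g - c - phi g).
Proof.
  intros Hnb [phi [Hadd [M HM]]]. apply Hnb.
  exists (fun g => f g - phi g). split.
  - exists (M + Rabs c). intros g.
    replace (f g - phi g) with ((f g - c - phi g) + c) by ring.
    eapply Rle_trans; [apply Rabs_triang|]. pose proof (HM g). lra.
  - intros g h. unfold cobound1. rewrite Hadd. ring.
Qed.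

End Ulam.

Section Quasimorphism.
Variables (G : Type) (mul : G -> G -> G) (e : G) (f : G -> R) (D : R).
Hypothesis HD : forall g h, Rabs (f (mul g h) - f g - f h) <= D.

Definition circle_map (t : R) : G -> Mat := fun g _ _ => cis (t * f g).

Lemma circle_map_unitary t : Umap G 1 (circle_map t).
Proof. intros g. apply unitary1, Cnorm2_cis. Qed.

Lemma circle_map_e t : f e = 0 -> meq 1 (circle_map t e) mid.
Proof.
  intros Hfe i j Hi Hj. replace i with 0%nat by lia. replace j with 0%nat by lia.
  unfold circle_map. rewrite Hfe, Rmult_0_r, cis_0. reflexivity.
Qed.

Lemma defect_circle_map t : 0 <= t -> defect G mul 1 (circle_map t) <= t * D.
Proof.
  intros Ht. apply Rsup_le; [eexists; exists e, e; reflexivity|].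
  intros y [x [x' ->]]. rewrite opnorm1. unfold msub. rewrite mmul1.
  unfold circle_map. rewrite Cmul_cis.
  eapply Rle_trans; [apply dist_cis_le|].
  replace (t * f (mul x x') - (t * f x + t * f x')) with (t * (f (mul x x') - f x - f x'))
    by ring.
  rewrite Rabs_mult, (Rabs_pos_eq t Ht). apply Rmult_le_compat_l; auto.
Qed.

(* The lift [t f - th] of a nearby character is additive up to [2 pi Z], and its
   additivity defect is at most [t D + 3 acos (1 - s^2/2) < 2 pi]. *)
Lemma near_additive_of_near_circle_hom t s nu :
  0 < t -> 0 <= s <= 2 -> t * D + 3 * acos (1 - s * s / 2) < 2 * PI ->
  IsHom G mul 1 nu -> (forall g, opnorm 1 (msub (circle_map t g) (nu g)) < s) ->
  exists phi, additive G mul phi /\ bounded1 G (fun g => f g - phi g).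
Proof.
  intros Ht Hs Hroom [Hunit Hmul] Hnear.
  set (al := acos (1 - s * s / 2)) in *.
  destruct (choice (fun g th => Rabs th < al /\ cis (t * f g - th) = nu g 0%nat 0%nat))
    as [th Hth].
  { intros g. apply cis_lift; auto.
    - apply unitary1, Hunit.
    - specialize (Hnear g). rewrite opnorm1 in Hnear. exact Hnear. }
  set (psi := fun g => t * f g - th g).
  assert (Hpsi : additive G mul psi).
  { intros x y. apply cis_inj_small.
    - unfold psi. rewrite <- Cmul_cis, !(proj2 (Hth _)), <- mmul1. apply Hmul; lia.
    - unfold psi.
      replace (t * f (mul x y) - th (mul x y) - (t * f x - th x + (t * f y - th y)))
        with (t * (f (mul x y) - f x - f y) - th (mul x y) + th x + th y) by ring.
      assert (Hq : Rabs (t * (f (mul x y) - f x - f y)) <= t * D).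
      { rewrite Rabs_mult, Rabs_pos_eq by lra. apply Rmult_le_compat_l; [lra|auto]. }
      pose proof (Rle_abs (t * (f (mul x y) - f x - f y))).
      pose proof (Rle_abs (- (t * (f (mul x y) - f x - f y)))). rewrite Rabs_Ropp in *.
      destruct (Hth x) as [Hx _], (Hth y) as [Hy _], (Hth (mul x y)) as [Hxy _].
      apply Rabs_def2 in Hx, Hy, Hxy. apply Rabs_def1; lra. }
  exists (fun g => psi g / t). split.
  - intros x y. rewrite Hpsi. field. lra.
  - exists (al / t). intros g.
    replace (f g - psi g / t) with (th g * / t) by (unfold psi; field; lra).
    rewrite Rabs_mult, (Rabs_pos_eq (/ t)) by (apply Rlt_le, Rinv_0_lt_compat; lra).
    apply Rmult_le_compat_r; [apply Rlt_le, Rinv_0_lt_compat; lra|].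
    destruct (Hth g); lra.
Qed.

Lemma D_nonneg : 0 <= D.
Proof. pose proof (HD e e). pose proof (Rabs_pos (f (mul e e) - f e - f e)). lra. Qed.

Lemma circle_maps_far_from_homs :
  f e = 0 -> ~ (exists phi, additive G mul phi /\ bounded1 G (fun g => f g - phi g)) ->
  forall d, d > 0 -> forall s, s < sqrt 3 -> exists mu, Umap G 1 mu /\
    defect G mul 1 mu <= d /\ meq 1 (mu e) mid /\ s <= Dist G mul 1 mu.
Proof.
  intros Hfe Hfar d Hd s Hs.
  set (s' := Rmax s 0).
  assert (Hs' : 0 <= s' /\ s' * s' < 3 /\ s <= s').
  { pose proof (sqrt_pos 3). pose proof (sqrt_sqrt 3 ltac:(lra)).
    unfold s', Rmax; destruct (Rle_dec s 0); repeat split; nra. }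
  set (al := acos (1 - s' * s' / 2)).
  assert (Hal : al < 2 * (PI / 3)) by (apply acos_lt_2PI3; nra).
  pose proof D_nonneg.
  set (m := Rmin d (2 * PI - 3 * al)).
  assert (Hm : 0 < m /\ m <= d /\ m <= 2 * PI - 3 * al).
  { unfold m, Rmin. destruct (Rle_dec d (2 * PI - 3 * al)); lra. }
  set (t := m / (D + 1)).
  assert (Ht : 0 < t) by (apply Rdiv_lt_0_compat; lra).
  assert (HtD : t * D < m).
  { replace m with (t * (D + 1)) by (unfold t; field; lra). nra. }
  exists (circle_map t). repeat split.
  - apply circle_map_unitary.
  - pose proof (defect_circle_map t ltac:(lra)). lra.
  - apply circle_map_e; auto.
  - apply Rle_trans with s'; [lra|].
    apply Dist_ge; [lia|apply circle_map_unitary|]. intros nu Hnu.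
    apply NNPP. intro Hclose. apply Hfar.
    apply (near_additive_of_near_circle_hom t s' nu); auto; [nra|fold al; lra|].
    intros g. apply Rnot_le_lt. intro. apply Hclose. eauto.
Qed.

End Quasimorphism.

Theorem corollary2p4 (G : Type) (mul : G -> G -> G) (e : G) (inv : G -> G)
  (HG : IsGroup G mul e inv)
  (Hnot : ~ comparison_injective G mul) :
  def_n G mul e 1 >= sqrt 3 /\ ~ UlamStable G mul e.
Proof.
  destruct (quasimorphism_of_not_comparison_injective G mul Hnot) as [f [M [HM Hfar]]].
  set (f0 := fun g => f g - f e).
  assert (Hq : forall g h, Rabs (f0 (mul g h) - f0 g - f0 h) <= 2 * M).
  { apply quasimorphism_normalize; auto. apply (grp_idl _ _ _ _ HG). }
  assert (Hf0e : f0 e = 0) by (unfold f0; ring).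
  destruct (def_ge_of_far_maps G mul e (sqrt 3)) as [Hdef1 Hdeffd].
  { apply (circle_maps_far_from_homs G mul e f0 (2 * M) Hq Hf0e).
    apply (not_near_additive G mul f (f e) Hfar). }
  split; auto.
  unfold UlamStable. pose proof (sqrt_lt_R0 3 ltac:(lra)). lra.
Qed.
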